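(* Let $P_n$ be the path graph with $n$ nodes labeled consecutively from one end to the other as $1,2,\dots,n$. Then the sequence $C=(\theta_{12},\theta_{13},\dots,\theta_{1n})$ of communicability angles between node $1$ and the other nodes is monotonic.
   Context: For a graph with adjacency matrix $A$, the communicability is $G_{pq}=(e^{A})_{pq}$ and the communicability angle $\theta_{pq}\in[0^\circ,90^\circ]$ between nodes $p,q$ is defined by $\cos\theta_{pq}=G_{pq}/\sqrt{G_{pp}G_{qq}}$. *)

From mathcomp Require Import all_boot all_order all_algebra.
From mathcomp Require Import all_classical all_reals all_analysis.
Set Implicit Arguments. Unset Strict Implicit. Unset Printing Implicit Defensive.
Import Order.TTheory GRing.Theory Num.Theory.
Local Open Scope ring_scope.

(* Adjacency matrix of the path graph P_n; node k (1-based in the paper) is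
   the ordinal k-1 here; nodes i, j adjacent iff |i - j| = 1. *)
Definition path_adj (R : realType) (n : nat) : 'M[R]_n :=
  \matrix_(i < n, j < n) (if (i.+1 == j :> nat) || (j.+1 == i :> nat) then 1 else 0).

Definition mxexp (R : realType) (n : nat) (A : 'M[R]_n) : 'M[R]_n :=
  \matrix_(p < n, q < n) (limn (fun N : nat => \sum_(0 <= k < N) ((A ^+ k) p q / (k`!)%:R))).

Definition communicability (R : realType) (n : nat) (A : 'M[R]_n) (p q : 'I_n) : R :=
  mxexp A p q.

Definition comm_angle (R : realType) (n : nat) (A : 'M[R]_n) (p q : 'I_n) : R :=
  acos (communicability A p q /
        Num.sqrt (communicability A p p * communicability A q q)).

(* For a nonnegative tridiagonal matrix A, G = e^A is totally positive of
   order 2: G_xv G_yu <= G_xu G_yv whenever x <= y and u <= v.  The inequality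
   holds coefficientwise in the Cauchy product of the two exponential series:
   differentiating (e^(tA))_xu (e^(tA))_yv in t gives a recurrence for the
   coefficients which, since A only links neighbouring indices, propagates the
   inequality from degree m to degree m + 1.  For the symmetric matrix e^A of
   the path graph, the minors on rows 1, j and 1, j+1 against columns j, j+1
   give G_{1,j+1}^2 G_jj <= G_1j^2 G_{j+1,j+1}, so cos theta_1j decreases
   and theta_1j increases with j. *)

From mathcomp Require Import all_boot all_order all_algebra.
From mathcomp Require Import all_classical all_reals all_analysis.
From mathcomp Require Import zify ring lra.
Import Order.TTheory GRing.Theory Num.Theory numFieldNormedType.Exports.
Local Open Scope ring_scope.

Set Implicit Arguments. Unset Strict Implicit.

Section AntidiagonalSums.
Variables (R : numFieldType) (g : nat -> nat -> R).

Lemma sum_antidiagonals M :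
  \sum_(0 <= m < M) \sum_(0 <= a < m.+1) g a (m - a)%N =
  \sum_(0 <= a < M) \sum_(0 <= b < M - a) g a b.
Proof.
elim: M => [|M IH]; first by rewrite !big_geq.
rewrite big_nat_recr //= IH.
have -> : \sum_(0 <= a < M.+1) \sum_(0 <= b < M.+1 - a) g a b =
   \sum_(0 <= a < M.+1) (\sum_(0 <= b < M - a) g a b + g a (M - a)%N).
  by apply: eq_big_nat => a /andP[_ ha]; rewrite subSn // big_nat_recr.
rewrite big_split /=; congr (_ + _).
by rewrite big_nat_recr //= subnn [X in _ + X]big_geq // addr0.
Qed.

Hypothesis g_ge0 : forall a b, 0 <= g a b.

Let sum_prefix_le a N M : (N <= M)%N ->
  \sum_(0 <= b < N) g a b <= \sum_(0 <= b < M) g a b.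
Proof. exact: (@nondecreasing_series R (g a) predT 0%N (fun b _ _ => g_ge0 a b)). Qed.

Lemma sum_square_le_antidiagonals N :
  \sum_(0 <= a < N) \sum_(0 <= b < N) g a b <=
  \sum_(0 <= m < N + N) \sum_(0 <= a < m.+1) g a (m - a)%N.
Proof.
rewrite sum_antidiagonals (big_cat_nat (leq0n N) (leq_addr N N)) /= -[leLHS]addr0.
apply: lerD; last by apply: sumr_ge0 => a _; apply: sumr_ge0.
by apply: ler_sum_nat => a /andP[_ ha]; apply: sum_prefix_le; lia.
Qed.

Lemma sum_antidiagonals_le_square M :
  \sum_(0 <= m < M) \sum_(0 <= a < m.+1) g a (m - a)%N <=
  \sum_(0 <= a < M) \sum_(0 <= b < M) g a b.
Proof.
by rewrite sum_antidiagonals; apply: ler_sum_nat => a _; apply: sum_prefix_le; lia.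
Qed.

End AntidiagonalSums.

Section MatrixExponential.
Variables (R : realType) (n : nat) (A : 'M[R]_n).

Definition mxexp_term (p q : 'I_n) : R ^nat := fun k => (A ^+ k) p q / k`!%:R.

Lemma mxexpE p q : mxexp A p q = limn (series (mxexp_term p q)).
Proof. by rewrite mxE. Qed.

Lemma mxexp_term0 p q : mxexp_term p q 0 = (p == q)%:R.
Proof. by rewrite /mxexp_term expr0 mxE fact0 divr1. Qed.

Lemma mxexp_termS p q k :
  k.+1%:R * mxexp_term p q k.+1 = \sum_(w < n) mxexp_term p w k * A w q.
Proof.
rewrite /mxexp_term exprSr mxE factS natrM invfM mulrCA mulrA.
rewrite [_ * (_ / _)]mulrA mulfK ?pnatr_eq0 // mulr_suml.
by apply: eq_bigr => w _; rewrite mulrAC.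
Qed.

Lemma mxexp_sym : (forall i j, A i j = A j i) -> forall p q, mxexp A p q = mxexp A q p.
Proof.
move=> A_sym p q; have exprA_sym k i j : (A ^+ k) i j = (A ^+ k) j i.
  elim: k i j => [|k IH] i j; first by rewrite expr0 !mxE eq_sym.
  rewrite [in LHS]exprSr [in RHS]exprS !mxE; apply: eq_bigr => w _.
  by rewrite IH A_sym mulrC.
rewrite !mxexpE; congr (limn (series _)).
by apply: funext => k; rewrite /mxexp_term exprA_sym.
Qed.

(* The coefficient of t^m in (e^(tA))_xu * (e^(tA))_yv. *)
Definition mxexp_cauchy (x y : 'I_n) (m : nat) (u v : 'I_n) : R :=
  \sum_(0 <= a < m.+1) mxexp_term x u a * mxexp_term y v (m - a)%N.

Lemma mxexp_cauchyS x y m u v :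
  m.+1%:R * mxexp_cauchy x y m.+1 u v =
  \sum_(w < n) A w u * mxexp_cauchy x y m w v +
  \sum_(w < n) A w v * mxexp_cauchy x y m u w.
Proof.
rewrite /mxexp_cauchy mulr_sumr.
have -> : \sum_(0 <= a < m.+2)
      m.+1%:R * (mxexp_term x u a * mxexp_term y v (m.+1 - a)%N) =
    \sum_(0 <= a < m.+2) (a%:R * mxexp_term x u a) * mxexp_term y v (m.+1 - a)%N +
    \sum_(0 <= a < m.+2)
      mxexp_term x u a * ((m.+1 - a)%N%:R * mxexp_term y v (m.+1 - a)%N).
  rewrite -big_split /=; apply: eq_big_nat => a /andP[_ ha].
  have split_m : (m.+1 = a + (m.+1 - a))%N by rewrite subnKC.
  by set b := (m.+1 - a)%N; rewrite {1}split_m natrD; ring.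
congr (_ + _).
  rewrite big_nat_recl // mul0r mul0r add0r.
  under eq_bigr do rewrite subSS mxexp_termS mulr_suml.
  rewrite exchange_big /=; apply: eq_bigr => w _; rewrite mulr_sumr.
  by apply: eq_bigr => a _; ring.
rewrite big_nat_recr //= subnn mul0r mulr0 addr0.
have -> : \sum_(0 <= a < m.+1)
      mxexp_term x u a * ((m.+1 - a)%N%:R * mxexp_term y v (m.+1 - a)%N) =
    \sum_(0 <= a < m.+1) \sum_(w < n)
      mxexp_term x u a * (mxexp_term y w (m - a)%N * A w v).
  by apply: eq_big_nat => a /andP[_ ha]; rewrite subSn // mxexp_termS mulr_sumr.
rewrite exchange_big /=; apply: eq_bigr => w _; rewrite mulr_sumr.
by apply: eq_bigr => a _; ring.
Qed.

Hypothesis A_ge0 : forall i j, 0 <= A i j.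

Lemma exprmx_ge0 k i j : 0 <= (A ^+ k) i j.
Proof.
elim: k i j => [|k IH] i j; first by rewrite expr0 mxE; case: eqP.
by rewrite exprSr mxE; apply: sumr_ge0 => w _; apply: mulr_ge0.
Qed.

Lemma exprmx_le k i j : (A ^+ k) i j <= (\sum_i0 \sum_j0 A i0 j0) ^+ k.
Proof.
set c := \sum_i0 _; have col_le j' : \sum_w A w j' <= c.
  by apply: ler_sum => w _; rewrite (bigD1 j') //= lerDl sumr_ge0.
elim: k i j => [|k IH] i j; first by rewrite expr0 mxE; case: eqP.
rewrite exprSr mxE exprSr (le_trans _ (ler_wpM2l (exprn_ge0 k _) (col_le j))) //.
  by rewrite mulr_sumr; apply: ler_sum => w _; rewrite ler_wpM2r.
by apply: sumr_ge0 => i0 _; apply: sumr_ge0.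
Qed.

Lemma mxexp_term_ge0 p q k : 0 <= mxexp_term p q k.
Proof. by rewrite /mxexp_term divr_ge0 ?exprmx_ge0. Qed.

Lemma is_cvg_mxexp_series p q : cvgn (series (mxexp_term p q)).
Proof.
pose c := \sum_i0 \sum_j0 A i0 j0.
have c_ge0 : 0 <= c by apply: sumr_ge0 => i0 _; apply: sumr_ge0.
apply: (series_le_cvg (v_ := exp_coeff c)) (is_cvg_series_exp_coeff c).
- exact: mxexp_term_ge0.
- by move=> k; apply: exp_coeff_ge0.
- by move=> k; rewrite /mxexp_term /exp_coeff /= ler_wpM2r // exprmx_le.
Qed.

Lemma mxexp_series_le p q N : series (mxexp_term p q) N <= mxexp A p q.
Proof.
rewrite mxexpE; apply: nondecreasing_cvgn_le; last exact: is_cvg_mxexp_series.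
exact: (nondecreasing_series (P := predT) (fun k _ _ => mxexp_term_ge0 p q k)).
Qed.

Lemma mxexp_ge0 p q : 0 <= mxexp A p q.
Proof.
apply: le_trans (mxexp_series_le p q 0).
by rewrite /series /= big_geq.
Qed.

Lemma mxexp_diag_ge1 p : 1 <= mxexp A p p.
Proof.
apply: le_trans (mxexp_series_le p p 1).
by rewrite /series /= big_nat1 mxexp_term0 eqxx.
Qed.

Lemma mx_le_mxexp p q : A p q <= mxexp A p q.
Proof.
apply: le_trans (mxexp_series_le p q 2).
rewrite /series /= big_nat_recr //= big_nat1 mxexp_term0 /mxexp_term expr1 divr1.
by rewrite lerDr; case: eqP.
Qed.

Hypothesis A_tridiag : forall i j : 'I_n, (i.+1 < j)%N || (j.+1 < i)%N -> A i j = 0.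

(* In the recurrence, A w u <> 0 forces w <= u + 1 <= v and A w v <> 0 forces
   u <= v - 1 <= w, so the induction hypothesis applies to every term. *)
Lemma mxexp_cauchy_le (x y : 'I_n) m (u v : 'I_n) : (x <= y)%N -> (u <= v)%N ->
  mxexp_cauchy x y m v u <= mxexp_cauchy x y m u v.
Proof.
move=> le_xy; elim: m u v => [|m IH] u v le_uv.
  rewrite /mxexp_cauchy !big_nat1 !mxexp_term0.
  have [exv|ne_xv] := eqVneq x v; last by rewrite mul0r mulr_ge0 ?ler0n.
  have [eyu|ne_yu] := eqVneq y u; last by rewrite mulr0 mulr_ge0 ?ler0n.
  have exy : x = y by apply: val_inj; apply/eqP; rewrite eqn_leq le_xy exv eyu.
  by rewrite -eyu -exv exy eqxx.
have [->//|ne_uv] := eqVneq u v.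
have lt_uv : (u < v)%N by rewrite ltn_neqAle ne_uv.
rewrite -subr_ge0 -(pmulr_rge0 _ (ltr0Sn R m)) mulrBr !mxexp_cauchyS.
have -> : \sum_(w < n) A w u * mxexp_cauchy x y m w v +
  \sum_(w < n) A w v * mxexp_cauchy x y m u w -
  (\sum_(w < n) A w v * mxexp_cauchy x y m w u +
   \sum_(w < n) A w u * mxexp_cauchy x y m v w) =
  \sum_(w < n) A w u * (mxexp_cauchy x y m w v - mxexp_cauchy x y m v w) +
  \sum_(w < n) A w v * (mxexp_cauchy x y m u w - mxexp_cauchy x y m w u).
  under [in RHS]eq_bigr do rewrite mulrBr.
  under [X in _ = _ + X]eq_bigr do rewrite mulrBr.
  by rewrite !sumrB; ring.
apply: addr_ge0; apply: sumr_ge0 => w _.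
- have [w_far|w_near] := boolP ((w.+1 < u)%N || (u.+1 < w)%N).
    by rewrite A_tridiag // mul0r.
  by rewrite mulr_ge0 // subr_ge0 IH //; lia.
- have [w_far|w_near] := boolP ((w.+1 < v)%N || (v.+1 < w)%N).
    by rewrite A_tridiag // mul0r.
  by rewrite mulr_ge0 // subr_ge0 IH //; lia.
Qed.

Lemma mxexp_tp2 (x y u v : 'I_n) : (x <= y)%N -> (u <= v)%N ->
  mxexp A x v * mxexp A y u <= mxexp A x u * mxexp A y v.
Proof.
move=> le_xy le_uv; rewrite !mxexpE -limM; try exact: is_cvg_mxexp_series.
apply: limr_le; first by apply: is_cvgM; apply: is_cvg_mxexp_series.
near=> N => /=; rewrite -!mxexpE.
have series_mul p q r s N' : series (mxexp_term p q) N' * series (mxexp_term r s) N' =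
    \sum_(0 <= a < N') \sum_(0 <= b < N') mxexp_term p q a * mxexp_term r s b.
  by rewrite /series /= mulr_suml; apply: eq_bigr => a _; rewrite mulr_sumr.
have term_mul_ge0 p q r s a b : 0 <= mxexp_term p q a * mxexp_term r s b.
  by rewrite mulr_ge0 ?mxexp_term_ge0.
have series_ge0 p q N' : 0 <= series (mxexp_term p q) N'.
  by apply: sumr_ge0 => k _; apply: mxexp_term_ge0.
have series_le_lim : series (mxexp_term x u) (N + N) * series (mxexp_term y v) (N + N)
    <= mxexp A x u * mxexp A y v by rewrite ler_pM ?mxexp_series_le.
apply: le_trans series_le_lim.
rewrite !series_mul.
apply: le_trans (sum_square_le_antidiagonals (term_mul_ge0 x v y u) N) _.
apply: le_trans (sum_antidiagonals_le_square (term_mul_ge0 x u y v) _).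
by apply: ler_sum_nat => m _; apply: mxexp_cauchy_le.
Unshelve. all: by end_near.
Qed.

End MatrixExponential.

Section Correlation.
Variables (R : realType) (n : nat) (G : 'M[R]_n).

Definition mx_corr (p q : 'I_n) : R := G p q / Num.sqrt (G p p * G q q).

Hypotheses (G_sym : forall i j, G i j = G j i) (G_ge0 : forall i j, 0 <= G i j).
Hypothesis G_diag_gt0 : forall i, 0 < G i i.
Hypothesis G_tp2 : forall x y u v : 'I_n, (x <= y)%N -> (u <= v)%N ->
  G x v * G y u <= G x u * G y v.

Let sqrt_diag_gt0 p q : 0 < Num.sqrt (G p p * G q q).
Proof. by rewrite sqrtr_gt0 mulr_gt0. Qed.

Lemma mx_corr_ge0 p q : 0 <= mx_corr p q.
Proof. by rewrite /mx_corr divr_ge0 ?sqrtr_ge0. Qed.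

Lemma mx_corr_le1 p q : mx_corr p q <= 1.
Proof.
wlog le_pq : p q / (p <= q)%N.
  move=> hw; have [/hw//|/ltnW/hw] := leqP p q.
  by rewrite /mx_corr G_sym [G p p * _]mulrC.
have := G_tp2 le_pq le_pq; rewrite [G q p]G_sym -expr2 => sq_le.
rewrite /mx_corr ler_pdivrMr ?sqrt_diag_gt0 // mul1r -(ger0_norm (G_ge0 p q)) -sqrtr_sqr.
by rewrite ler_sqrt // mulr_ge0 ?ltW.
Qed.

Lemma mx_corr_antitone (o j k : 'I_n) : (o <= j <= k)%N -> 0 < G j k ->
  mx_corr o k <= mx_corr o j.
Proof.
move=> /andP[le_oj le_jk] Gjk_gt0.
have minor_j := G_tp2 le_oj le_jk.
have minor_k := G_tp2 (leq_trans le_oj le_jk) le_jk; rewrite [G k j]G_sym in minor_k.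
have key : G o k ^+ 2 * G j j <= G o j ^+ 2 * G k k.
  rewrite -(ler_pM2r Gjk_gt0).
  have := ler_pM (mulr_ge0 (G_ge0 _ _) (ltW (G_diag_gt0 _)))
    (mulr_ge0 (G_ge0 _ _) (ltW Gjk_gt0)) minor_j minor_k.
  by congr (_ <= _); ring.
have diag_ge0 i : 0 <= G i i by apply: ltW.
rewrite -ler_sqr ?nnegrE ?mx_corr_ge0 // !expr_div_n !sqr_sqrtr ?mulr_ge0 //.
rewrite ler_pdivrMr ?mulr_gt0 // mulrAC ler_pdivlMr ?mulr_gt0 //.
have := G_diag_gt0 o; have := G_diag_gt0 j; have := G_diag_gt0 k; nra.
Qed.

End Correlation.

Lemma le_acos (R : realType) : {in `[(-1), 1] &, {homo @acos R : x y /~ x <= y}}.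
Proof.
move=> x y x_in y_in le_xy; rewrite leNgt; apply/negP.
have acos_in z : z \in `[(-1 : R), 1] -> acos z \in `[0, pi].
  by rewrite !in_itv /= => z_in; rewrite acos_ge0 ?acos_lepi.
by rewrite -(ltr_cos (acos_in _ y_in) (acos_in _ x_in)) !acosK // ltNge le_xy.
Qed.

Lemma homo_leq_ord d (T : porderType d) n (f : 'I_n -> T) :
  (forall i j : 'I_n, val j = i.+1 -> (f i <= f j)%O) ->
  forall i j : 'I_n, (i <= j)%N -> (f i <= f j)%O.
Proof.
case: n f => [|m] f f_succ i j; first by case: i.
have := @homo_leq_in _ [pred k | (k < m.+1)%N] (fun k => f (inord k))
  (fun a b => (a <= b)%O) lexx (@le_trans _ T) _ _ i j.
rewrite !inord_val; apply; rewrite ?inE //.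
- by move=> a b _ b_lt c /andP[_ lt_cb]; rewrite inE (ltn_trans lt_cb).
- by move=> k; rewrite !inE => lt_km lt_Skm; apply: f_succ; rewrite /= !inordK.
Qed.

Section PathGraph.
Variables (R : realType) (n : nat).

Lemma path_adj_ge0 (i j : 'I_n) : 0 <= path_adj R n i j.
Proof. by rewrite mxE; case: ifP. Qed.

Lemma path_adj_sym (i j : 'I_n) : path_adj R n i j = path_adj R n j i.
Proof. by rewrite !mxE orbC. Qed.

Lemma path_adj_tridiag (i j : 'I_n) :
  (i.+1 < j)%N || (j.+1 < i)%N -> path_adj R n i j = 0.
Proof. by rewrite mxE; case: ifP => // /orP[] /eqP; lia. Qed.

Lemma path_adj_succ (i j : 'I_n) : val j = i.+1 -> path_adj R n i j = 1.
Proof. by rewrite mxE => ->; rewrite eqxx. Qed.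

End PathGraph.

Theorem proposition5p2 (R : realType) (n : nat) (h0 : (0 < n)%N) :
  let theta := fun j : 'I_n => comm_angle (path_adj R n) (Ordinal h0) j in
  (forall i j : 'I_n, (1 <= i)%N -> (i <= j)%N -> theta i <= theta j) \/
  (forall i j : 'I_n, (1 <= i)%N -> (i <= j)%N -> theta j <= theta i).
Proof.
move=> theta; left=> i j _; move: i j; apply: homo_leq_ord => j k succ_jk.
pose A := path_adj R n; pose G := mxexp A; pose o := Ordinal h0.
have A_ge0 : forall i j, 0 <= A i j := @path_adj_ge0 R n.
have G_sym : forall i j, G i j = G j i := mxexp_sym (@path_adj_sym R n).
have G_ge0 : forall i j, 0 <= G i j := mxexp_ge0 A_ge0.
have G_diag_gt0 i : 0 < G i i := lt_le_trans ltr01 (mxexp_diag_ge1 A_ge0 i).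
have G_tp2 := mxexp_tp2 A_ge0 (@path_adj_tridiag R n).
have corr_in i : mx_corr G o i \in `[(-1), 1].
  rewrite in_itv /= (mx_corr_le1 G_sym G_ge0 G_diag_gt0 G_tp2) andbT.
  exact: le_trans (lerN10 R) (mx_corr_ge0 G_ge0 o i).
change (acos (mx_corr G o j) <= acos (mx_corr G o k)).
apply: le_acos => //; apply: (mx_corr_antitone G_sym G_ge0 G_diag_gt0 G_tp2).
- by rewrite /= succ_jk leqnSn.
- by apply: lt_le_trans (mx_le_mxexp A_ge0 j k); rewrite path_adj_succ.
Qed.
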